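(* For all $m,n\in\mathbb{N}$ with $mn>1$ and every $\boldsymbol{\gamma}\in[0,1)^m$, we have $\Omega^{\boldsymbol{\gamma}}(m,n)\neq\emptyset$.
   Context: $[0,1)^{m\times n}$ is the set of real $m\times n$ matrices with entries in $[0,1)$. For $\boldsymbol{x}\in\mathbb{R}^n$, $\|\boldsymbol{x}\|=\max_i|x_i|$; for $\boldsymbol{y}\in\mathbb{R}^m$, $\langle\boldsymbol{y}\rangle=\min_{\boldsymbol{p}\in\mathbb{Z}^m}\|\boldsymbol{y}-\boldsymbol{p}\|$. For $\psi:\mathbb{N}\to[0,\infty)$, $W_{m,n}(\psi)$ is the set of pairs $(A,\boldsymbol{\gamma})\in[0,1)^{m\times n}\times[0,1)^m$ such that $\langle A\boldsymbol{q}-\boldsymbol{\gamma}\rangle<\psi(\|\boldsymbol{q}\|)$ for infinitely many $\boldsymbol{q}\in\mathbb{Z}^n$. ''Decreasing'' means non-increasing. $\mathcal{D}$ is the set of decreasing $\psi:\mathbb{N}\to[0,\infty)$ with $\sum_{q\ge1}q^{n-1}\psi(q)^m=\infty$. $\Omega(m,n)=\bigcap_{\psi\in\mathcal{D}}W_{m,n}(\psi)$ and $\Omega^{\boldsymbol{\gamma}}(m,n)=\{A\in[0,1)^{m\times n}:(A,\boldsymbol{\gamma})\in\Omega(m,n)\}$. *)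

From HB Require Import structures.
From mathcomp Require Import all_boot all_order all_algebra.
From mathcomp Require Import all_classical all_reals all_analysis.
From mathcomp Require Import Rstruct Rstruct_topology.
Set Implicit Arguments. Unset Strict Implicit. Unset Printing Implicit Defensive.
Import Order.TTheory GRing.Theory Num.Theory.
Local Open Scope ring_scope.
Local Open Scope classical_set_scope.

Definition R := Rdefinitions.R.

Definition supnorm (n : nat) (q : 'cV[int]_n) : nat :=
  \max_(i < n) absz (q i ord0).

Definition dist_Z (x : R) : R := Num.min (x - (Num.floor x)%:~R) ((Num.ceil x)%:~R - x).

(* <y> = min_{p in Z^m} ||y - p|| (sup norm) = max_j dist(y_j, Z) *)
Definition dist_Zm (m : nat) (y : 'cV[R]_m) : R := \big[Num.max/0]_(j < m) dist_Z (y j ord0).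

Definition unit_entries (m n : nat) (A : 'M[R]_(m, n)) : Prop :=
  forall i j, 0 <= A i j < 1.

Definition W (m n : nat) (psi : nat -> R) (A : 'M[R]_(m, n)) (g : 'cV[R]_m) : Prop :=
  unit_entries A /\ unit_entries g /\
  infinite_set [set q : 'cV[int]_n |
     dist_Zm (A *m map_mx (fun z : int => z%:~R) q - g) < psi (supnorm q)].

(* decreasing (= non-increasing) psi : N -> [0,oo) with
   sum_{q >= 1} q^(n-1) psi(q)^m = infinity *)
Definition in_D (m n : nat) (psi : nat -> R) : Prop :=
  (forall k, 0 <= psi k) /\
  (forall k l, (1 <= k <= l)%N -> psi l <= psi k) /\
  (series (fun k : nat => (k.+1)%:R ^+ (n.-1) * psi k.+1 ^+ m) @ \oo --> +oo).

Definition Omega_gamma (m n : nat) (g : 'cV[R]_m) : set 'M[R]_(m, n) :=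
  [set A | unit_entries A /\ forall psi, @in_D m n psi -> @W m n psi A g].

From HB Require Import structures.
From mathcomp Require Import all_boot all_order all_algebra.
From mathcomp Require Import all_classical all_reals all_analysis.
From mathcomp Require Import Rstruct Rstruct_topology.
From mathcomp Require Import zify ring lra.

(* For n >= 2 take the matrix whose first column is gamma and whose other
   columns vanish: it solves A q = gamma exactly for the infinitely many
   q = (1, k, 0, ..., 0), and every psi in D is positive.
   For n = 1, so m >= 2, build each entry x of the column A as a limit of
   rationals so that t_i x = gamma_j + O(1/t_i^2) modulo 1 along the tower
   t_i = 2^(3^i).  If psi (t_i) <= 2/t_i^2 for all large i then, psi being
   decreasing and m >= 2, every term psi(k)^m of the block [t_i, t_(i+1))
   is at most 4/t_i^4 <= 4/(t_i t_(i+1)), and these block bounds telescope: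
   the series of D would converge. *)

Set Implicit Arguments.
Unset Strict Implicit.
Unset Printing Implicit Defensive.
Import Order.TTheory GRing.Theory Num.Theory.
Local Open Scope ring_scope.
Local Open Scope classical_set_scope.

Lemma infinite_set_of_unbounded (T : choiceType) (S : set T) (h : T -> nat) :
  (forall M, exists2 x, S x & (M < h x)%N) -> infinite_set S.
Proof.
move=> unbounded /finite_fsetP [X SX].
have [x + Mx] := unbounded (\max_(y <- finmap.enum_fset X) h y).
rewrite SX /= => xX.
by have := @leq_bigmax_seq _ _ xpredT h x xX erefl; rewrite leqNgt Mx.
Qed.

Section NonnegativeSums.
Variables (F : realFieldType) (u : nat -> F).
Hypothesis u_ge0 : forall k, 0 <= u k.

Lemma sum_nat_le_mono N M : (N <= M)%N ->
  \sum_(0 <= k < N) u k <= \sum_(0 <= k < M) u k.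
Proof. exact: (@nondecreasing_series _ u xpredT 0 (fun k _ _ => u_ge0 k)). Qed.

Lemma sum_nat_le_eventually0 K : (forall k, (K <= k)%N -> u k = 0) ->
  forall N, \sum_(0 <= k < N) u k <= \sum_(0 <= k < K) u k.
Proof.
move=> uK N.
apply: (le_trans (sum_nat_le_mono (leq_addl K N))).
rewrite (big_cat_nat (leq0n K) (leq_addr N K)) /=.
rewrite [X in _ + X]big1_seq ?addr0 //.
by move=> k /andP[_]; rewrite mem_index_iota => /andP[/uK].
Qed.

Lemma sum_block_le_telescope (c : F) (a b : nat) : (0 < a <= b)%N ->
  (forall k, (a <= k < b)%N -> u k <= c / (a%:R * b%:R)) ->
  \sum_(a <= k < b) u k <= c / a%:R - c / b%:R.
Proof.
move=> /andP[a0 ab] ub.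
have a0' : 0 < a%:R :> F by rewrite ltr0n.
have b0 : b%:R != 0 :> F by rewrite pnatr_eq0 -lt0n (leq_trans a0 ab).
apply: (le_trans (ler_sum_nat ub)); rewrite sumr_const_nat.
suff -> : c / (a%:R * b%:R) *+ (b - a) = c / a%:R - c / b%:R by [].
by rewrite -mulr_natr natrB //; field; rewrite b0 gt_eqF.
Qed.

Lemma sum_nat_le_blocks (c : F) (p : nat -> nat) I :
  0 <= c -> (0 < p 0)%N -> (forall i, p i < p i.+1)%N ->
  (forall i k, (I <= i)%N -> (p i <= k < p i.+1)%N ->
     u k <= c / ((p i)%:R * (p i.+1)%:R)) ->
  forall N, \sum_(0 <= k < N) u k <= \sum_(0 <= k < p I) u k + c / (p I)%:R.
Proof.
move=> c0 p0_gt0 p_incr ub.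
have p_gt0 i : (0 < p i)%N by elim: i => // i /leq_trans; apply; exact: ltnW.
have p_ge i : (i <= p i)%N by elim: i => // i /leq_ltn_trans; apply.
have partial j : \sum_(0 <= k < p (I + j)%N) u k <=
    \sum_(0 <= k < p I) u k + c / (p I)%:R - c / (p (I + j)%N)%:R.
  elim: j => [|j IH]; first by rewrite addn0 addrK.
  rewrite addnS (big_cat_nat (leq0n _) (ltnW (p_incr _))) /=.
  have := @sum_block_le_telescope c (p (I + j)%N) (p (I + j).+1).
  rewrite p_gt0 ltnW // => /(_ isT (ub _^~ (leq_addr _ _))); lra.
move=> N; have /le_trans -> // :=
  sum_nat_le_mono (leq_trans (leq_addl I N) (p_ge (I + N)%N)).
apply: (le_trans (partial N)); rewrite lerBlDr lerDl.
by apply: divr_ge0.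
Qed.

End NonnegativeSums.

Fixpoint tower (i : nat) : nat := if i is i'.+1 then tower i' ^ 3 else 2.

Lemma tower_ge2 i : (2 <= tower i)%N.
Proof.
elim: i => [|i IH] //=.
by apply: (leq_trans IH); rewrite -{1}(expn1 (tower i)) leq_pexp2l //; lia.
Qed.

Lemma tower_double i : (2 * tower i <= tower i.+1)%N.
Proof. by have := tower_ge2 i; rewrite /= !expnS expn0; nia. Qed.

Lemma tower_lt i : (tower i < tower i.+1)%N.
Proof. by have := tower_double i; have := tower_ge2 i; lia. Qed.

Lemma tower_gt i : (i < tower i)%N.
Proof. by elim: i => [|i IH] //; exact: leq_ltn_trans IH (tower_lt i). Qed.

Definition frac {F : archiFieldType} (y : F) : F := y - (Num.floor y)%:~R.

Lemma frac_ge0 (F : archiFieldType) (y : F) : 0 <= frac y.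
Proof. by rewrite subr_ge0 floor_le. Qed.

Lemma frac_lt1 (F : archiFieldType) (y : F) : frac y < 1.
Proof. by rewrite ltrBlDr addrC -[1]/(1%:~R) -intrD floorD1_gt. Qed.

Section TowerApproximation.
Context {F : realType} (gamma : F).

Lemma tower_gt0 i : 0 < (tower i)%:R :> F.
Proof. by rewrite ltr0n; have := tower_ge2 i; lia. Qed.

(* [tower_approx i] is the least number [>= tower_approx i.-1] with
   [tower i * tower_approx i = gamma] modulo 1. *)
Fixpoint tower_approx (i : nat) : F :=
  if i is i'.+1 then
    tower_approx i' +
      frac (gamma - (tower i)%:R * tower_approx i') / (tower i)%:R
  else gamma / 2.

Lemma tower_approx_congr i : exists z : int,
  (tower i)%:R * tower_approx i - gamma = z%:~R.
Proof.
case: i => [|i] /=; first by exists 0; rewrite mulr2n; field.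
exists (- Num.floor (gamma - (tower i.+1)%:R * tower_approx i)).
have t_gt0 := tower_gt0 i.+1.
by rewrite /frac intrN mulrDr mulrCA mulfV ?gt_eqF //; ring.
Qed.

Lemma tower_approx_step i :
  tower_approx i <= tower_approx i.+1 <= tower_approx i + 1 / (tower i.+1)%:R.
Proof.
have t_gt0 := tower_gt0 i.+1.
rewrite [tower_approx i.+1]/= lerDl lerD2l.
rewrite divr_ge0 ?frac_ge0 ?(ltW t_gt0) //=.
by rewrite ler_pM2r ?invr_gt0 // ltW ?frac_lt1.
Qed.

Lemma tower_approx_nondecreasing : nondecreasing_seq tower_approx.
Proof. by apply/nondecreasing_seqP => i; case/andP: (tower_approx_step i). Qed.

Lemma tower_approx_le i j :
  tower_approx j <= tower_approx i + 2 / (tower i.+1)%:R.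
Proof.
have t_ge0 k : 0 <= 2 / (tower k)%:R :> F by rewrite divr_ge0 ?ltW ?tower_gt0.
have [ij|/ltnW/tower_approx_nondecreasing ji] := leqP i j; last first.
  by apply: (le_trans ji); rewrite lerDl.
rewrite -(subnK ij).
suff : tower_approx ((j - i) + i) <=
  tower_approx i + 2 / (tower i.+1)%:R - 2 / (tower (j - i + i).+1)%:R.
  by have := t_ge0 (j - i + i).+1; lra.
elim: (j - i)%N => [|d IH]; first by rewrite add0n addrK.
rewrite addSn; case/andP: (tower_approx_step (d + i)) => _.
have halve : 2 / (tower (d + i).+2)%:R <= 1 / (tower (d + i).+1)%:R :> F.
  rewrite ler_pdivrMr ?tower_gt0 // mulrAC ler_pdivlMr ?tower_gt0 // mul1r.
  by rewrite -natrM ler_nat tower_double.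
lra.
Qed.

Definition tower_limit : F := sup (range tower_approx).

Lemma tower_limit_bounds i :
  tower_approx i <= tower_limit <= tower_approx i + 2 / (tower i.+1)%:R.
Proof.
have ne : range tower_approx !=set0 by exists (tower_approx 0), 0%N.
apply/andP; split.
  apply: sup_upper_bound; last by exists i.
  split => //; exists (tower_approx 0 + 2 / (tower 1)%:R) => _ [j _ <-].
  exact: tower_approx_le.
by apply: ge_sup => // _ [j _ <-]; exact: tower_approx_le.
Qed.

Lemma tower_limit_unit : 0 <= gamma < 1 -> 0 <= tower_limit < 1.
Proof.
have /= := tower_limit_bounds 0; rewrite (_ : (2 ^ 3)%N%:R = 8 :> F) //.
by move=> /andP[? ?] /andP[? ?]; apply/andP; split; lra.
Qed.

Lemma tower_limit_approx i : exists z : int,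
  0 <= (tower i)%:R * tower_limit - gamma - z%:~R <= 2 / (tower i)%:R ^+ 2.
Proof.
have [z hz] := tower_approx_congr i; exists z.
have t_gt0 := tower_gt0 i; have /andP[lo hi] := tower_limit_bounds i.
have -> : (tower i)%:R * tower_limit - gamma - z%:~R =
    (tower i)%:R * (tower_limit - tower_approx i) by rewrite -hz; ring.
have -> : 2 / (tower i)%:R ^+ 2 = (tower i)%:R * (2 / (tower i.+1)%:R) :> F.
  by rewrite /= natrX; field; rewrite gt_eqF.
by rewrite mulr_ge0 ?ler_pM2l //; lra.
Qed.

End TowerApproximation.

Lemma dist_Z_intrD_le (z : int) (t : R) : 0 <= t -> dist_Z (z%:~R + t) <= t.
Proof.
move=> t_ge0; rewrite /dist_Z ge_min; apply/orP; left.
have : z <= Num.floor (z%:~R + t) by rewrite floor_ge_int lerDl.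
by rewrite -(ler_int R); lra.
Qed.

Lemma dist_Zm_le m (y : 'cV[R]_m) e :
  0 <= e -> (forall j, dist_Z (y j ord0) <= e) -> dist_Zm y <= e.
Proof. by move=> e_ge0 y_le; rewrite /dist_Zm; apply: bigmax_le. Qed.

Section DivergentApproximationFunctions.
Variables (m n : nat) (psi : nat -> R).
Hypothesis psi_D : in_D m n psi.

Let u k := (k.+1)%:R ^+ n.-1 * psi k.+1 ^+ m.

Let u_ge0 k : 0 <= u k.
Proof. by case: psi_D => psi_ge0 _; rewrite mulr_ge0 ?exprn_ge0. Qed.

Lemma in_D_unbounded B : exists N, B < \sum_(0 <= k < N) u k.
Proof.
case: psi_D => _ [_ /cvgryPgt /(_ B) [N _ uN]].
by exists N; apply: uN => /=.
Qed.

Lemma in_D_gt0 : (0 < m)%N -> forall k, (0 < k)%N -> 0 < psi k.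
Proof.
move=> m_gt0 k k_gt0; case: psi_D => psi_ge0 [psi_decr _].
rewrite lt_neqAle psi_ge0 andbT; apply/negP => /eqP psik0.
have u_tail j : (k <= j)%N -> u j = 0.
  move=> kj; have : psi j.+1 <= psi k by apply: psi_decr; rewrite k_gt0; lia.
  rewrite /u -psik0 => psij.
  have -> : psi j.+1 = 0 by apply/eqP; rewrite eq_le psij psi_ge0.
  by rewrite expr0n gtn_eqF // mulr0.
have [N] := in_D_unbounded (\sum_(0 <= j < k) u j).
by rewrite ltNge sum_nat_le_eventually0.
Qed.

End DivergentApproximationFunctions.

Lemma in_D1_frequently_gt m psi (p : nat -> nat) : (1 < m)%N -> in_D m 1 psi ->
  (2 <= p 0)%N -> (forall i, p i < p i.+1)%N ->
  (forall i, p i.+1 <= p i ^ 3)%N ->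
  forall M, exists2 i, (M <= i)%N & 2 / (p i)%:R ^+ 2 < psi (p i).
Proof.
move=> m_gt1 psi_D p0_ge2 p_incr p_cube M.
apply: contrapT => /forall2NP psi_small.
have {}psi_small i : (M <= i)%N -> psi (p i) <= 2 / (p i)%:R ^+ 2.
  by move=> Mi; case: (psi_small i) => //; rewrite leNgt => /negP.
have [psi_ge0 [psi_decr _]] := psi_D.
pose u k := (k.+1)%:R ^+ 1.-1 * psi k.+1 ^+ m.
have p_ge2 i : (2 <= p i)%N by elim: i => // i /leq_trans; apply; exact: ltnW.
have u_block i k : (M <= i)%N -> (p i <= k < p i.+1)%N ->
    u k <= 4 / ((p i)%:R * (p i.+1)%:R).
  move=> Mi /andP[ik ki]; rewrite /u expr0 mul1r.
  have pi_ge2 : 2 <= (p i)%:R :> R by rewrite ler_nat.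
  have psi_k : psi k.+1 <= psi (p i) by apply: psi_decr; have := p_ge2 i; lia.
  have small_le1 : 2 / (p i)%:R ^+ 2 <= 1 :> R.
    by rewrite ler_pdivrMr ?exprn_gt0 ?mul1r ?expr2; nra.
  have psi_le : psi k.+1 <= 2 / (p i)%:R ^+ 2.
    exact: le_trans psi_k (psi_small i Mi).
  apply: (le_trans (ler_wiXn2l (psi_ge0 _) _ m_gt1)).
    exact: le_trans small_le1.
  apply: (le_trans (lerXn2r 2 (psi_ge0 _) _ psi_le)).
    by rewrite nnegrE divr_ge0 ?exprn_ge0 //; lra.
  have pq_le : (p i)%:R * (p i.+1)%:R <= (p i)%:R ^+ (2 * 2) :> R.
    by rewrite -natrM -natrX ler_nat (expnS _ 3) leq_mul2l p_cube orbT.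
  have pi1_ge2 : 2 <= (p i.+1)%:R :> R by rewrite ler_nat p_ge2.
  rewrite expr_div_n -exprM -natrX; apply: ler_wpM2l => //.
  by rewrite lef_pV2 ?posrE ?mulr_gt0 ?exprn_gt0 //; lra.
have [N] :=
  @in_D_unbounded _ _ _ psi_D (\sum_(0 <= k < p M) u k + 4 / (p M)%:R).
rewrite ltNge sum_nat_le_blocks //.
  by move=> k; rewrite mulr_ge0 ?exprn_ge0.
by have := p_ge2 0; lia.
Qed.

Definition tower_limit_col m (g : 'cV[R]_m) : 'cV[R]_m :=
  \col_j tower_limit (g j ord0).

Lemma tower_limit_col_dist m (g : 'cV[R]_m) i :
  dist_Zm (tower_limit_col g *m map_mx (fun z : int => z%:~R)
             (const_mx (tower i)%:Z) - g) <= 2 / (tower i)%:R ^+ 2.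
Proof.
apply: dist_Zm_le => [|j]; first by rewrite divr_ge0 ?exprn_ge0 ?ltW ?tower_gt0.
rewrite !mxE big_ord1 !mxE /=.
have [z /andP[z_lo z_hi]] := tower_limit_approx (g j ord0) i.
apply: le_trans z_hi; apply: le_trans (dist_Z_intrD_le z z_lo).
by rewrite [z%:~R + _]addrC subrK pmulrn mulrC.
Qed.

Lemma tower_limit_col_Omega m (g : 'cV[R]_m) : (1 < m)%N -> unit_entries g ->
  @Omega_gamma m 1 g (tower_limit_col g).
Proof.
move=> m_gt1 g_unit.
have A_unit : unit_entries (tower_limit_col g).
  by move=> i j; rewrite mxE; apply: tower_limit_unit.
split=> // psi psi_D; split=> //; split=> //.
apply: (@infinite_set_of_unbounded _ _ (@supnorm 1)) => M.
have [i Mi psi_gt] :=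
  in_D1_frequently_gt m_gt1 psi_D (tower_ge2 0) tower_lt (fun i => leqnn _) M.
have supnorm_tower : supnorm (const_mx (tower i)%:Z : 'cV_1) = tower i.
  by rewrite /supnorm big_ord1 mxE.
exists (const_mx (tower i)%:Z); rewrite /= supnorm_tower.
- exact: le_lt_trans (tower_limit_col_dist g i) psi_gt.
- exact: leq_ltn_trans Mi (tower_gt i).
Qed.

Definition first_col_mx m n (g : 'cV[R]_m) : 'M[R]_(m, n) :=
  \matrix_(i, j) if val j == 0%N then g i ord0 else 0.

Lemma first_col_Omega m n (g : 'cV[R]_m) : (0 < m)%N -> unit_entries g ->
  @Omega_gamma m n.+2 g (first_col_mx n.+2 g).
Proof.
move=> m_gt0 g_unit.
have A_unit : unit_entries (first_col_mx n.+2 g).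
  by move=> i j; rewrite mxE; case: eqP => _; rewrite ?lexx ?ltr01 ?g_unit.
split=> // psi psi_D; split=> //; split=> //.
apply: (@infinite_set_of_unbounded _ _ (@supnorm n.+2)) => M.
pose q : 'cV[int]_n.+2 := \col_j (if val j == 0%N then 1 else M.+1%:Z).
have supnorm_q : (M < supnorm q)%N.
  have := @leq_bigmax _ (fun j : 'I_n.+2 => absz (q j ord0)) (lift ord0 ord0).
  by apply: leq_trans; rewrite !mxE.
exists q => //=.
have solves :
    dist_Zm (first_col_mx n.+2 g *m map_mx (fun z : int => z%:~R) q - g) <= 0.
  apply: dist_Zm_le => // i.
  rewrite !mxE big_ord_recl !mxE /= mulr1 big1 ?addr0 ?subrr.
    by have := dist_Z_intrD_le 0 (lexx 0); rewrite addr0.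
  by move=> j _; rewrite !mxE /= mul0r.
apply: le_lt_trans solves (in_D_gt0 psi_D m_gt0 _); lia.
Qed.

Theorem corollary1p1 (m n : nat) (g : 'cV[R]_m) :
  (1 < m * n)%N -> unit_entries g -> (@Omega_gamma m n g) !=set0.
Proof.
case: n => [|[|n]] mn g_unit.
- by rewrite muln0 in mn.
- exists (tower_limit_col g); apply: tower_limit_col_Omega => //.
  by rewrite -[m]muln1.
- exists (first_col_mx n.+2 g); apply: first_col_Omega => //.
  by rewrite lt0n; apply: contraTneq mn => ->.
Qed.
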